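(* Let $X$ be a sofic shift, $Y$ an irreducible sofic shift, and $\phi : X \to Y$ a finite-to-one factor code. If $y$ is a doubly transitive point of $Y$, then $\phi^{-1}(y) \subset \Omega(X)$.
   Context: Shift spaces are closed shift-invariant subsets of $\mathcal{A}^{\mathbb{Z}}$; a factor code is an onto continuous shift-commuting map; finite-to-one means finite fibers. Sofic: image of a shift of finite type under a code. Irreducible: for all words $u,v$ there is $w$ with $uwv$ a word. A shift space is nonwandering if for every word $u$ there is $w$ with $uwu$ a word; $\Omega(X)$ denotes the unique maximal nonwandering subshift of $X$. A point $y$ is doubly transitive if every word of $Y$ occurs infinitely often in $y$ to the left and to the right. *)

From Stdlib Require Import ZArith List.
From mathcomp Require Import all_boot.
Set Implicit Arguments. Unset Strict Implicit. Unset Printing Implicit Defensive.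

Open Scope Z_scope.

Definition point (A : Type) := Z -> A.
Definition pset (A : Type) := point A -> Prop.

Definition shift (A : Type) (x : point A) : point A := fun i => x (i + 1).

Definition occurs_at (A : Type) (x : point A) (w : list A) (i : Z) : Prop :=
  forall (k : nat) (a : A), (k < size w)%N -> x (i + Z.of_nat k) = nth a w k.

Definition word_of (A : Type) (X : pset A) (w : list A) : Prop :=
  exists x i, X x /\ occurs_at x w i.

Definition agree_on (A : Type) (x x' : point A) (n : nat) : Prop :=
  forall i, - Z.of_nat n <= i <= Z.of_nat n -> x i = x' i.

(* closed in the product topology on A^Z (A discrete), unfolded: every point
   that is a limit of points of X (i.e. agrees with points of X on every
   central window) belongs to X *)
Definition closed_set (A : Type) (X : pset A) : Prop :=
  forall x, (forall n : nat, exists x', X x' /\ agree_on x x' n) -> X x.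

Definition shift_invariant (A : Type) (X : pset A) : Prop :=
  forall x, X x <-> X (shift x).

Definition shift_space (A : finType) (X : pset A) : Prop :=
  closed_set X /\ shift_invariant X.

Definition continuous_on (A B : Type) (X : pset A) (phi : point A -> point B) :=
  forall x, X x -> forall n : nat, exists m : nat,
    forall x', X x' -> agree_on x x' m -> agree_on (phi x) (phi x') n.

Definition code (A B : finType) (X : pset A) (Y : pset B)
  (phi : point A -> point B) : Prop :=
  shift_space X /\ shift_space Y /\
  (forall x, X x -> Y (phi x)) /\
  continuous_on X phi /\
  (forall x, X x -> phi (shift x) = shift (phi x)).

Definition factor_code (A B : finType) (X : pset A) (Y : pset B)
  (phi : point A -> point B) : Prop :=
  code X Y phi /\ (forall y, Y y -> exists x, X x /\ phi x = y).

Definition finite_to_one (A B : finType) (X : pset A)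
  (phi : point A -> point B) : Prop :=
  forall y, exists l : list (point A), forall x, X x -> phi x = y -> In x l.

Definition SFT (A : finType) (X : pset A) : Prop :=
  exists F : list (list A),
    forall x, X x <-> (forall w i, In w F -> ~ occurs_at x w i).

Definition sofic (A : finType) (X : pset A) : Prop :=
  exists (C : finType) (Z0 : pset C) (psi : point C -> point A),
    SFT Z0 /\ factor_code Z0 X psi.

Definition irreducible (A : finType) (X : pset A) : Prop :=
  forall u v, word_of X u -> word_of X v ->
    exists w, word_of X (u ++ w ++ v).

Definition nonwandering (A : finType) (X : pset A) : Prop :=
  forall u, word_of X u -> exists w, word_of X (u ++ w ++ u).

(* Omega(X): the maximal nonwandering subshift of X, realised as the union of
   all nonwandering subshifts of X (which equals the maximal one) *)
Definition Omega (A : finType) (X : pset A) : pset A :=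
  fun x => exists Z0 : pset A,
    shift_space Z0 /\ (forall z, Z0 z -> X z) /\ nonwandering Z0 /\ Z0 x.

Definition doubly_transitive (A : finType) (Y : pset A) (y : point A) : Prop :=
  Y y /\ forall w, word_of Y w -> forall N : Z,
    (exists i, N <= i /\ occurs_at y w i) /\
    (exists i, i <= N /\ occurs_at y w i).

(* Every point x over y lies in the orbit closure of the fiber phi^-1(y), and this closure is
   nonwandering.  Lift phi to a sliding block code on a shift of finite type covering X.  Since
   y is doubly transitive, the synchronising (minimal-ambiguity) windows of the lift recur in y
   to the left and right of any block, which lets us splice: every central block of a point of
   the fiber reappears arbitrarily far to the right in some point of the same fiber.  The fiber
   being finite, a single fiber point contains the block twice, so every word u of the closure
   extends to a word u w u of the closure. *)
From Pilot Require Import Defs.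
From Stdlib Require Import ZArith List Lia FunctionalExtensionality ClassicalEpsilon Classical.
From mathcomp Require Import all_boot zify.
Import Defs.
Set Implicit Arguments. Unset Strict Implicit.
Open Scope Z_scope.

Definition shiftZ (A : Type) (t : Z) (x : point A) : point A := fun i => x (i + t).

Lemma shiftZ0 (A : Type) (x : point A) : shiftZ 0 x = x.
Proof. by apply: functional_extensionality => i; rewrite /shiftZ Z.add_0_r. Qed.

Lemma shift_shiftZ (A : Type) (t : Z) (x : point A) : shift (shiftZ t x) = shiftZ (t + 1) x.
Proof.
by apply: functional_extensionality => i; rewrite /shift /shiftZ -Z.add_assoc (Z.add_comm 1).
Qed.

Lemma shiftZ_invariant (A : Type) (S : pset A) :
  shift_invariant S -> forall t x, S x -> S (shiftZ t x).
Proof.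
move=> Sinv t; induction t as [|t IHt|t IHt] using Z.peano_ind => x Sx.
- by rewrite shiftZ0.
- by rewrite -Z.add_1_r -shift_shiftZ; apply: (proj1 (Sinv _)); apply: IHt.
- by apply: (proj2 (Sinv _)); rewrite shift_shiftZ Z.add_pred_l Z.add_1_r Z.pred_succ; apply: IHt.
Qed.

Lemma shiftZ_comm (A B : Type) (S : pset A) (g : point A -> point B) :
  shift_invariant S -> (forall x, S x -> g (shift x) = shift (g x)) ->
  forall t x, S x -> g (shiftZ t x) = shiftZ t (g x).
Proof.
move=> Sinv gshift t; induction t as [|t IHt|t IHt] using Z.peano_ind => x Sx.
- by rewrite !shiftZ0.
- by rewrite -Z.add_1_r -!shift_shiftZ gshift ?IHt //; apply: shiftZ_invariant.
- have Spred := shiftZ_invariant Sinv (Z.pred t) Sx.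
  have := gshift _ Spred; rewrite shift_shiftZ Z.add_pred_l Z.add_1_r Z.pred_succ IHt // => E.
  apply: functional_extensionality => i.
  have Ei := equal_f E (i - 1); rewrite /shift Z.sub_add in Ei.
  by rewrite -Ei /shiftZ; congr (g x); lia.
Qed.

Section Cofinal.
Variables (I T : Type) (le : I -> I -> Prop) (i0 : I).
Hypothesis le_trans : forall i j k, le i j -> le j k -> le i k.
Hypothesis le_directed : forall i j, exists k, le i k /\ le j k.

Definition cofinal (P : I -> Prop) := forall i, exists j, le i j /\ P j.

Lemma cofinal_In (l : list T) (P : T -> I -> Prop) :
  cofinal (fun j => exists a, In a l /\ P a j) -> exists a, In a l /\ cofinal (P a).
Proof.
elim: l => [|a l IHl] Pl; first by have [j [_ [a [[]]]]] := Pl i0.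
have [Pa|Pa] := classic (cofinal (P a)); first by exists a; split; [left|].
have [ia bound_a] : exists ia, forall j, le ia j -> ~ P a j.
  apply: NNPP => unbounded; apply: Pa => i; apply: NNPP => none.
  by apply: unbounded; exists i => j ij Paj; apply: none; exists j.
have [b [lb Pb]] : exists b, In b l /\ cofinal (P b).
  apply: IHl => i; have [k [ik iak]] := le_directed i ia.
  have [j [kj [b [[<-|lb] Pbj]]]] := Pl k.
    by case: (bound_a j (le_trans iak kj)).
  by exists j; split; [exact: le_trans ik kj | exists b].
by exists b; split; [right|].
Qed.

End Cofinal.

Lemma inP (T : eqType) (x : T) (s : seq T) : reflect (In x s) (x \in s).
Proof.
elim: s => [|a s IHs] /=; first by constructor.
rewrite in_cons eq_sym; apply: (iffP orP) => [[/eqP|/IHs]|[->|/IHs]]; by [left|right|left|right].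
Qed.

Definition infinitely (Q : nat -> Prop) := cofinal leq Q.

Lemma infinitely_pigeonhole (A : finType) (Q : nat -> Prop) (f : nat -> A) :
  infinitely Q -> exists a, infinitely (fun j => Q j /\ f j = a).
Proof.
move=> Qinf.
have [|a [_ Qa]] := cofinal_In 0%N (fun i j k => @leq_trans j i k)
  (fun i j => ex_intro _ (maxn i j) (conj (leq_maxl i j) (leq_maxr i j)))
  (l := enum A) (P := fun a j => Q j /\ f j = a); last by exists a.
move=> i; have [j [ij Qj]] := Qinf i.
by exists j; split=> //; exists (f j); split=> //; apply/inP; rewrite mem_enum.
Qed.

Section Compactness.
Variables (A : finType) (f : nat -> point A).

Definition refine (Q : nat -> Prop) (c : Z) : nat -> Prop := fun j =>
  Q j /\ f j c = epsilon (inhabits (f 0%N 0)) (fun a => infinitely (fun j => Q j /\ f j c = a)).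

Lemma refine_infinitely (Q : nat -> Prop) (c : Z) : infinitely Q -> infinitely (refine Q c).
Proof. by move/(infinitely_pigeonhole (fun j => f j c)); apply: epsilon_spec. Qed.

(* [nest k] is a decreasing chain of infinite index sets, along which every [f j] takes the
   same values on [-k + 1, k - 1]; the common values define a cluster point of [f]. *)
Fixpoint nest (k : nat) : nat -> Prop :=
  if k is k'.+1 then refine (refine (nest k') (Z.of_nat k')) (- Z.of_nat k')
  else fun _ => True.

Lemma nest_infinitely (k : nat) : infinitely (nest k).
Proof.
elim: k => [|k IHk] /=; first by move=> i; exists i.
exact/refine_infinitely/refine_infinitely.
Qed.

Lemma nest_sub (k K j : nat) : (k <= K)%N -> nest K j -> nest k j.
Proof.
elim: K => [|K IHK]; first by rewrite leqn0 => /eqP ->.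
by rewrite leq_eqVlt ltnS => /orP [/eqP -> //|/IHK kK [[/kK]]].
Qed.

Lemma nest_agree (k j j' : nat) (c : Z) :
  nest k.+1 j -> nest k.+1 j' -> Z.abs c = Z.of_nat k -> f j c = f j' c.
Proof.
move=> [[_ ej] e'j] [[_ ej'] e'j'] ck.
have [->|->] : c = Z.of_nat k \/ c = - Z.of_nat k by lia.
  by rewrite ej ej'.
by rewrite e'j e'j'.
Qed.

Definition nest_limit : point A :=
  fun c => f (epsilon (inhabits 0%N) (nest (Z.abs_nat c).+1)) c.

Lemma agree_nest_limit (n j : nat) : nest n.+1 j -> agree_on nest_limit (f j) n.
Proof.
move=> nj i ni; rewrite /nest_limit; set k := Z.abs_nat i.
have kn : (k <= n)%N by apply/leP; lia.
apply: (nest_agree (k := k)); last by rewrite /k; lia.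
- by apply: epsilon_spec; have [j' [_ nj']] := nest_infinitely k.+1 0%N; exists j'.
- exact: nest_sub nj.
Qed.

End Compactness.

Lemma closed_set_cluster (A : finType) (S : pset A) (f : nat -> point A) :
  closed_set S -> (forall j, S (f j)) ->
  exists x, S x /\ forall n : nat, infinitely (fun j => agree_on x (f j) n).
Proof.
move=> Sclosed Sf.
have cluster n : infinitely (fun j => agree_on (nest_limit f) (f j) n).
  move=> i; have [j [ij nj]] := nest_infinitely f n.+1 i.
  by exists j; split; last exact: agree_nest_limit.
exists (nest_limit f); split=> //.
by apply: Sclosed => n; have [j [_ ?]] := cluster n 0%N; exists (f j).
Qed.

Definition sliding_block (C D : Type) (S : pset C) (G : point C -> point D) (m : nat) :=
  forall z z' i, S z -> S z' ->
    (forall j, i - Z.of_nat m <= j <= i + Z.of_nat m -> z j = z' j) -> G z i = G z' i.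

Lemma continuous_on_uniform0 (A B : finType) (S : pset A) (g : point A -> point B) :
  closed_set S -> continuous_on S g ->
  exists m : nat, forall z z', S z -> S z' -> agree_on z z' m -> g z 0 = g z' 0.
Proof.
move=> Sclosed gcont; apply: NNPP => nonuniform.
have bad m : exists zz : point A * point A,
    S zz.1 /\ S zz.2 /\ agree_on zz.1 zz.2 m /\ g zz.1 0 <> g zz.2 0.
  apply: NNPP => none; apply: nonuniform; exists m => z z' Sz Sz' zz'.
  by apply: NNPP => ne; apply: none; exists (z, z').
have [F F_bad] := choice _ bad.
pose S2 (p : point (A * A)) := S (fun i => (p i).1) /\ S (fun i => (p i).2).
have S2closed : closed_set S2.
  by move=> p p_lim; split; apply: Sclosed => n; have [p' [[Sp1 Sp2] pp']] := p_lim n;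
    [exists (fun i => (p' i).1) | exists (fun i => (p' i).2)]; split=> // i /pp' ->.
(* A cluster point of the bad pairs has equal coordinates; continuity fails there. *)
have [p [[Sp1 _] p_cluster]] := closed_set_cluster (f := fun m i => ((F m).1 i, (F m).2 i))
  S2closed (fun m => conj (proj1 (F_bad m)) (proj1 (proj2 (F_bad m)))).
have [m0 gm0] := gcont _ Sp1 0%N.
have [j [m0j pFj]] := p_cluster m0 m0.
have [SF1 [SF2 [F12 gF12]]] := F_bad j.
apply: gF12; rewrite -(gm0 _ SF1) ?(gm0 _ SF2) //; try lia.
- by move=> i im0; rewrite (pFj i im0) /=; apply: F12; lia.
- by move=> i im0; rewrite (pFj i im0).
Qed.

Lemma code_sliding_block (A B : finType) (S : pset A) (g : point A -> point B) :
  shift_space S -> continuous_on S g -> (forall x, S x -> g (shift x) = shift (g x)) ->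
  exists m, sliding_block S g m.
Proof.
move=> [Sclosed Sinv] gcont gshift.
have [m gm] := continuous_on_uniform0 Sclosed gcont.
exists m => z z' i Sz Sz' zz'.
have gi x : S x -> g x i = g (shiftZ i x) 0.
  by move=> Sx; rewrite (shiftZ_comm Sinv gshift) // /shiftZ.
rewrite gi // gi //; apply: gm; try exact: shiftZ_invariant.
by move=> j jm; apply: zz'; lia.
Qed.

Definition block (C : Type) (L : nat) (z : point C) (q : Z) : L.-tuple C :=
  [tuple z (q + Z.of_nat i) | i < L].

Lemma block_eqP (C : Type) (L : nat) (z z' : point C) (q : Z) :
  block L z q = block L z' q <-> forall i, q <= i < q + Z.of_nat L -> z i = z' i.
Proof.
split=> [zz' i iq|zz'].
  have iL : (Z.to_nat (i - q) < L)%N by apply/ltP; lia.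
  have := f_equal (fun s => tnth s (Ordinal iL)) zz'; rewrite !tnth_mktuple /=.
  by rewrite Z2Nat.id ?Zplus_minus //; lia.
by apply: eq_from_tnth => i; rewrite !tnth_mktuple; apply: zz'; have := ltn_ord i; lia.
Qed.

Lemma block_shiftZ (C : Type) (L : nat) (z : point C) (t q : Z) :
  block L (shiftZ t z) q = block L z (q + t).
Proof. by apply: eq_from_tnth => i; rewrite !tnth_mktuple /shiftZ; congr z; lia. Qed.

Definition maxlen (C : Type) (F : list (list C)) : nat :=
  foldr (fun w n => maxn (size w) n) 0%N F.

Lemma size_le_maxlen (C : Type) (F : list (list C)) (w : list C) :
  In w F -> (size w <= maxlen F)%N.
Proof. by elim: F => [|v F IHF] //= [->|/IHF]; lia. Qed.

Definition splice (C : Type) (w w' : point C) (g : Z) : point C :=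
  fun i => if i <? g then w i else w' i.

Section Splice.
Variables (C : finType) (Z0 : pset C) (F : list (list C)) (L : nat).
Hypothesis Z0_SFT : forall x, Z0 x <-> (forall w i, In w F -> ~ occurs_at x w i).
Hypothesis FL : (maxlen F <= L)%N.

(* A forbidden word is at most L long, so each occurrence lies left of [g + L] or right of [g]. *)
Lemma SFT_splice (w w' : point C) (g : Z) :
  Z0 w -> Z0 w' -> block L w g = block L w' g -> Z0 (splice w w' g).
Proof.
move=> Zw Zw' /block_eqP ww'; apply/Z0_SFT => u i Fu occ.
have uL := leq_trans (size_le_maxlen Fu) FL.
have [gi|ig] := Z.leb_spec g i.
- apply: (proj1 (Z0_SFT _) Zw' u i Fu) => k a ku; rewrite -(occ k a ku) /splice.
  by case: Z.ltb_spec => //; lia.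
- apply: (proj1 (Z0_SFT _) Zw u i Fu) => k a ku; rewrite -(occ k a ku) /splice.
  by case: Z.ltb_spec => // ?; apply: ww'; lia.
Qed.

End Splice.

Section SlidingSplice.
Variables (C D : Type) (S : pset C) (G : point C -> point D) (m : nat).
Hypothesis Gm : sliding_block S G m.

Lemma sliding_block_splice_l (L : nat) (w w' : point C) (g i : Z) :
  (2 * m < L)%N -> S (splice w w' g) -> S w -> block L w g = block L w' g ->
  i <= g + Z.of_nat m -> G (splice w w' g) i = G w i.
Proof.
move=> mL Ss Sw /block_eqP ww' ig; apply: Gm => // j ij; rewrite /splice.
by case: Z.ltb_spec => // jg; symmetry; apply: ww'; lia.
Qed.

Lemma sliding_block_splice_r (w w' : point C) (g i : Z) :
  S (splice w w' g) -> S w' -> g + Z.of_nat m <= i -> G (splice w w' g) i = G w' i.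
Proof.
move=> Ss Sw' gi; apply: Gm => // j ij; rewrite /splice.
by case: Z.ltb_spec => //; lia.
Qed.

End SlidingSplice.

Definition decide (P : Prop) : bool := if excluded_middle_informative P then true else false.

Lemma decideP (P : Prop) : reflect P (decide P).
Proof. by rewrite /decide; case: excluded_middle_informative => ?; constructor. Qed.

Lemma nat_argmin (T : Type) (f : T -> nat) (t0 : T) : exists t, forall t', (f t <= f t')%N.
Proof.
have hasP : exists n, decide (exists t, f t = n) by exists (f t0); apply/decideP; exists t0.
case: (ex_minnP hasP) => n /decideP [t <-] fmin.
by exists t => t'; apply: fmin; apply/decideP; exists t'.
Qed.

Section Synchronisation.
Variables (B C : finType) (Z0 : pset C) (Phi : point C -> point B) (m : nat).
Variables (y : point B) (L : nat) (W : nat -> Z -> Prop).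
Hypothesis Z0_shift : shift_space Z0.
Hypothesis Phi_m : sliding_block Z0 Phi m.
Hypothesis Phi_shift : forall z, Z0 z -> Phi (shift z) = shift (Phi z).
Hypothesis W_mono : forall N N' d, (N <= N')%N -> W N d -> W N' d.

Definition fits (D : Z -> Prop) (q : Z) (s : L.-tuple C) : Prop :=
  exists w, Z0 w /\ (forall d, D d -> Phi w (q + d) = y (q + d)) /\ block L w q = s.

Definition W_infinite (d : Z) : Prop := exists N, W N d.

Lemma fits_sub (D D' : Z -> Prop) (q : Z) (s : L.-tuple C) :
  (forall d, D d -> D' d) -> fits D' q s -> fits D q s.
Proof. by move=> DD' [w [Zw [Phiw ws]]]; exists w; split=> //; split=> // d /DD' /Phiw. Qed.

Lemma fits_transport (D : Z -> Prop) (q q' : Z) (s : L.-tuple C) :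
  (forall d, D d -> y (q' + d) = y (q + d)) -> fits D q s -> fits D q' s.
Proof.
move=> yqq' [w [Zw [Phiw <-]]]; have [_ Z0inv] := Z0_shift.
exists (shiftZ (q - q') w); split; first exact: shiftZ_invariant.
split; last by rewrite block_shiftZ Zplus_minus.
move=> d Dd; rewrite (shiftZ_comm Z0inv Phi_shift) // /shiftZ yqq' // -Phiw //.
by congr Phi; lia.
Qed.

Lemma fits_limit (q : Z) (s : L.-tuple C) : (forall N, fits (W N) q s) -> fits W_infinite q s.
Proof.
move=> fitsN; have [Z0closed _] := Z0_shift.
have [w w_fits] := choice _ fitsN.
have [x [Zx x_cluster]] := closed_set_cluster Z0closed (fun N => proj1 (w_fits N)).
exists x; split=> //; split.
- move=> d [N Nd]; have [j [Nj xwj]] := x_cluster (Z.to_nat (Z.abs (q + d)) + m)%N N.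
  have [Zwj [Phiwj _]] := w_fits j.
  by rewrite -(Phiwj d (W_mono Nj Nd)); apply: Phi_m => // i ?; apply: xwj; lia.
- have [j [_ xwj]] := x_cluster (Z.to_nat (Z.abs q) + L)%N 0%N.
  have [_ [_ <-]] := w_fits j.
  by apply/block_eqP => i ?; apply: xwj; lia.
Qed.

Definition fitting (N : nat) (q : Z) : {set L.-tuple C} := [set s | decide (fits (W N) q s)].

(* Choose the window and position where the fewest blocks fit: enlarging the window
   cannot shrink that set further, so the finite window already forces the infinite one. *)
Lemma synchronising_window : exists N q0, forall q,
  (forall d, W N d -> y (q + d) = y (q0 + d)) ->
  forall s, fits (W N) q s -> fits W_infinite q s.
Proof.
have [[N q0] fewest] := nat_argmin (fun Nq => #|fitting Nq.1 Nq.2|) (0%N, 0).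
exists N, q0 => q yqq0 s fits_s; apply: fits_limit => N'.
have [NN'|N'N] := leqP N N'; last first.
  by apply: fits_sub fits_s => d; apply: W_mono; apply: ltnW.
have sub : fitting N' q \subset fitting N q.
  by apply/subsetP => s'; rewrite !inE => /decideP fs'; apply/decideP;
    apply: fits_sub fs' => d; apply: W_mono.
have same : #|fitting N q| = #|fitting N q0|.
  apply: eq_card => s'; rewrite !inE; apply/decideP/decideP.
    by apply: fits_transport => d /yqq0.
  by apply: fits_transport => d /yqq0 ->.
have /subset_cardP eqset : #|fitting N' q| = #|fitting N q|.
  by apply/eqP; rewrite eqn_leq subset_leq_card // same (fewest (N', q)).
have : s \in fitting N q by rewrite inE; apply/decideP.
by rewrite -(eqset sub) inE => /decideP.
Qed.

End Synchronisation.

Lemma occurs_at_block (C : Type) (x z : point C) (L : nat) (q i : Z) :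
  occurs_at x (block L z q) i <->
  forall k, (k < L)%N -> x (i + Z.of_nat k) = z (q + Z.of_nat k).
Proof.
split=> [occ k kL|xz k a].
  by rewrite (occ k (z q)) ?size_tuple // (nth_mktuple _ _ (Ordinal kL)).
rewrite size_tuple => kL; rewrite (nth_mktuple _ _ (Ordinal kL)); exact: xz.
Qed.

Definition bi_recurrent (B : Type) (y : point B) : Prop := forall lo hi T : Z,
  (exists t, T <= t /\ forall i, lo <= i <= hi -> y (i + t) = y i) /\
  (exists t, t <= T /\ forall i, lo <= i <= hi -> y (i + t) = y i).

Lemma doubly_transitive_bi_recurrent (B : finType) (Y : pset B) (y : point B) :
  doubly_transitive Y y -> bi_recurrent y.
Proof.
move=> [Yy y_dt] lo hi T; set L := Z.to_nat (hi - lo + 1).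
have Yw : word_of Y (block L y lo) by exists y, lo; split=> //; apply/occurs_at_block.
have return_at i0 : occurs_at y (block L y lo) i0 ->
    forall i, lo <= i <= hi -> y (i + (i0 - lo)) = y i.
  move=> /occurs_at_block occ i ilohi.
  have := occ (Z.to_nat (i - lo)) ltac:(apply/ltP; lia).
  by rewrite Z2Nat.id; [rewrite Zplus_minus => <-; congr y; lia|lia].
have [[i1 [Ti1 occ1]] [i2 [i2T occ2]]] := y_dt _ Yw (T + lo).
by split; [exists (i1 - lo)|exists (i2 - lo)]; split; try lia; apply: return_at.
Qed.

Section SFTFiberReturn.
Variables (B C : finType) (Z0 : pset C) (F : list (list C)) (Phi : point C -> point B).
Variables (m : nat) (y : point B).
Hypothesis Z0_shift : shift_space Z0.
Hypothesis Z0_SFT : forall x, Z0 x <-> (forall w i, In w F -> ~ occurs_at x w i).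
Hypothesis Phi_m : sliding_block Z0 Phi m.
Hypothesis Phi_shift : forall z, Z0 z -> Phi (shift z) = shift (Phi z).

Let L := maxn (maxlen F) (2 * m).+1.
Let mZ := Z.of_nat m.

Lemma synchronising_left : exists (N : nat) (q0 : Z), forall g,
  (forall d, - Z.of_nat N <= d <= mZ -> y (g + d) = y (q0 + d)) ->
  forall z, Z0 z -> (forall i, g - Z.of_nat N <= i <= g + mZ -> Phi z i = y i) ->
  exists w, Z0 w /\ (forall i, i <= g + mZ -> Phi w i = y i) /\ block L w g = block L z g.
Proof.
have [|N [q0 sync]] := synchronising_window y L (W := fun N d => - Z.of_nat N <= d <= mZ)
  Z0_shift Phi_m Phi_shift; first by move=> N N' d; lia.
exists N, q0 => g yg z Zz Phiz.
have [|w [Zw [Phiw wz]]] := sync g yg (block L z g).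
  by exists z; split=> //; split=> // d ?; apply: Phiz; lia.
exists w; split=> //; split=> // i ig.
by rewrite -(Zplus_minus g i); apply: Phiw; exists (Z.to_nat (g - i)); lia.
Qed.

Lemma synchronising_right : exists (N : nat) (q0 : Z), forall g,
  (forall d, mZ <= d <= mZ + Z.of_nat N -> y (g + d) = y (q0 + d)) ->
  forall z, Z0 z -> (forall i, g + mZ <= i <= g + mZ + Z.of_nat N -> Phi z i = y i) ->
  exists w, Z0 w /\ (forall i, g + mZ <= i -> Phi w i = y i) /\ block L w g = block L z g.
Proof.
have [|N [q0 sync]] := synchronising_window y L (W := fun N d => mZ <= d <= mZ + Z.of_nat N)
  Z0_shift Phi_m Phi_shift; first by move=> N N' d; lia.
exists N, q0 => g yg z Zz Phiz.
have [|w [Zw [Phiw wz]]] := sync g yg (block L z g).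
  by exists z; split=> //; split=> // d ?; apply: Phiz; lia.
exists w; split=> //; split=> // i gi.
by rewrite -(Zplus_minus g i); apply: Phiw; exists (Z.to_nat (i - g - mZ)); lia.
Qed.

Lemma SFT_glue (w1 z w2 : point C) (g1 g2 : Z) :
  g1 <= g2 -> Z0 w1 -> Z0 z -> Z0 w2 ->
  block L w1 g1 = block L z g1 -> block L z g2 = block L w2 g2 ->
  (forall i, i <= g1 + mZ -> Phi w1 i = y i) ->
  (forall i, g1 + mZ <= i <= g2 + mZ -> Phi z i = y i) ->
  (forall i, g2 + mZ <= i -> Phi w2 i = y i) ->
  exists s, Z0 s /\ Phi s = y /\ forall i, g1 <= i < g2 -> s i = z i.
Proof.
move=> g12 Zw1 Zz Zw2 w1z zw2 Phiw1 Phiz Phiw2.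
have FL : (maxlen F <= L)%N by rewrite /L; apply: leq_maxl.
have mL : (2 * m < L)%N by rewrite /L; apply: leq_maxr.
set s1 := splice w1 z g1.
have Zs1 : Z0 s1 := SFT_splice Z0_SFT FL Zw1 Zz w1z.
have s1w2 : block L s1 g2 = block L w2 g2.
  rewrite -zw2; apply/block_eqP => i ?; rewrite /s1 /splice.
  by case: Z.ltb_spec => //; lia.
have Zs : Z0 (splice s1 w2 g2) := SFT_splice Z0_SFT FL Zs1 Zw2 s1w2.
exists (splice s1 w2 g2); split=> //; split.
- apply: functional_extensionality => i.
  have [ig2|g2i] := Z.leb_spec i (g2 + mZ); last first.
    by rewrite (sliding_block_splice_r Phi_m) ?Phiw2 //; lia.
  rewrite (sliding_block_splice_l Phi_m mL) //.
  have [ig1|g1i] := Z.leb_spec i (g1 + mZ).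
    by rewrite (sliding_block_splice_l Phi_m mL) ?Phiw1.
  by rewrite (sliding_block_splice_r Phi_m) ?Phiz //; lia.
- move=> i ig; rewrite /s1 /splice.
  by case: (Z.ltb_spec i g2); case: (Z.ltb_spec i g1) => //; lia.
Qed.

Hypothesis y_rec : bi_recurrent y.

(* Place a left and a right synchronising window on either side of [-n, n], then a common
   return of y to all of them at time [t]; cut [z0] shifted by [t] out between the two
   windows and complete it by half-line preimages of y. *)
Lemma SFT_fiber_return (z0 : point C) : Z0 z0 -> Phi z0 = y ->
  forall (n : nat) (T : Z),
  exists t, T <= t /\ exists z, Z0 z /\ Phi z = y /\ agree_on (shiftZ t z) z0 n.
Proof.
move=> Zz0 Phiz0 n T; set nZ := Z.of_nat n.
have [N1 [q1 sync1]] := synchronising_left.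
have [N2 [q2 sync2]] := synchronising_right.
have [_ [t1 [t1n yt1]]] := y_rec (q1 - Z.of_nat N1) (q1 + mZ) (- nZ - q1).
have [[t2 [t2n yt2]] _] := y_rec (q2 + mZ) (q2 + mZ + Z.of_nat N2) (nZ + 1 - q2).
have [[t [Tt yt]] _] := y_rec (q1 + t1 - Z.of_nat N1) (q2 + t2 + mZ + Z.of_nat N2) T.
exists t; split=> //; have [_ Z0inv] := Z0_shift.
set zt := shiftZ (- t) z0.
have Zzt : Z0 zt by apply: shiftZ_invariant.
have Phizt i : q1 + t1 - Z.of_nat N1 <= i - t <= q2 + t2 + mZ + Z.of_nat N2 -> Phi zt i = y i.
  move=> it; rewrite (shiftZ_comm Z0inv Phi_shift) // Phiz0 /shiftZ.
  by rewrite -[in RHS](Z.sub_add t i) yt.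
have [||w1 [Zw1 [Phiw1 w1zt]]] := sync1 (q1 + t1 + t) _ zt Zzt.
- move=> d dN1; rewrite -(yt1 (q1 + d)); last lia.
  by rewrite -(yt (q1 + d + t1)); [congr y|]; lia.
- by move=> i ?; apply: Phizt; lia.
have [||w2 [Zw2 [Phiw2 w2zt]]] := sync2 (q2 + t2 + t) _ zt Zzt.
- move=> d dN2; rewrite -(yt2 (q2 + d)); last lia.
  by rewrite -(yt (q2 + d + t2)); [congr y|]; lia.
- by move=> i ?; apply: Phizt; lia.
have [||s [Zs [Phis szt]]] := SFT_glue (g1 := q1 + t1 + t) (g2 := q2 + t2 + t) _
  Zw1 Zzt Zw2 w1zt (esym w2zt) Phiw1 _ Phiw2; try lia.
  by move=> i ?; apply: Phizt; lia.
exists s; split=> //; split=> // i ni.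
by rewrite /shiftZ szt; [rewrite /zt /shiftZ; congr z0|]; lia.
Qed.

End SFTFiberReturn.

Lemma continuous_on_comp (A B D : Type) (X : pset A) (Y : pset B)
    (g : point A -> point B) (h : point B -> point D) :
  (forall x, X x -> Y (g x)) -> continuous_on X g -> continuous_on Y h ->
  continuous_on X (fun x => h (g x)).
Proof.
move=> gXY gcont hcont x Xx n; have [k hk] := hcont _ (gXY _ Xx) n.
have [l gl] := gcont _ Xx k.
by exists l => x' Xx' xx'; apply: hk; [apply: gXY | apply: gl].
Qed.

Lemma fiber_return (A B : finType) (X : pset A) (Y : pset B) (phi : point A -> point B) :
  sofic X -> factor_code X Y phi ->
  forall y, doubly_transitive Y y -> forall x1, X x1 -> phi x1 = y ->
  forall (n : nat) (T : Z),
  exists t, T <= t /\ exists x, X x /\ phi x = y /\ agree_on (shiftZ t x) x1 n.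
Proof.
move=> [C [Z0 [psi [[F Z0_SFT] [[Z0_shift [_ [psiX [psi_cont psi_shift]]]] psi_onto]]]]].
move=> [[_ [_ [phiY [phi_cont phi_shift]]]] _] y /doubly_transitive_bi_recurrent y_rec.
move=> x1 Xx1 phix1 n T.
have [m psi_m] := code_sliding_block Z0_shift psi_cont psi_shift.
have [|m' Phi_m] := code_sliding_block (g := fun z => phi (psi z)) Z0_shift
  (continuous_on_comp psiX psi_cont phi_cont).
  by move=> z Zz; rewrite psi_shift ?phi_shift //; apply: psiX.
have [z0 [Zz0 psiz0]] := psi_onto _ Xx1.
have [|t [Tt [z [Zz [Phiz zz0]]]]] := SFT_fiber_return Z0_shift Z0_SFT Phi_m _ y_rec Zz0
  (etrans (f_equal phi psiz0) phix1) (n + m) T.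
  by move=> z' Zz'; rewrite psi_shift ?phi_shift //; apply: psiX.
exists t; split=> //; exists (psi z); split; first exact: psiX.
split=> // i ni; have [_ Z0inv] := Z0_shift.
rewrite -psiz0 -(shiftZ_comm Z0inv psi_shift) //.
by apply: psi_m => //; [apply: shiftZ_invariant | move=> j ij; apply: zz0; lia].
Qed.

(* With finitely many preimages of y, one of them must realise cofinally many of the returns. *)
Lemma fiber_return_twice (A B : finType) (X : pset A) (Y : pset B) (phi : point A -> point B) :
  sofic X -> factor_code X Y phi -> finite_to_one X phi ->
  forall y, doubly_transitive Y y -> forall x1, X x1 -> phi x1 = y ->
  forall (n : nat) (D : Z), exists x t t', X x /\ phi x = y /\ t + D <= t' /\
    agree_on (shiftZ t x) x1 n /\ agree_on (shiftZ t' x) x1 n.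
Proof.
move=> Xsofic phi_factor phi_fin y y_dt x1 Xx1 phix1 n D.
have [l fiber_l] := phi_fin y.
have [|x [_ x_returns]] := cofinal_In 0 Z.le_trans
  (fun i j => ex_intro _ (Z.max i j) (conj (Z.le_max_l i j) (Z.le_max_r i j)))
  (l := l) (P := fun x t => X x /\ phi x = y /\ agree_on (shiftZ t x) x1 n).
  move=> T; have [t [Tt [x [Xx [phix xx1]]]]] := fiber_return Xsofic phi_factor y_dt Xx1 phix1 n T.
  by exists t; split=> //; exists x; split; [apply: fiber_l|].
have [t [_ [Xx [phix xtx1]]]] := x_returns 0.
have [t' [tt' [_ [_ xt'x1]]]] := x_returns (t + D).
by exists x, t, t'.
Qed.

Lemma occurs_at_cat (C : Type) (x : point C) (u v : list C) (i : Z) :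
  occurs_at x (u ++ v) i <-> occurs_at x u i /\ occurs_at x v (i + Z.of_nat (size u)).
Proof.
split=> [occ|[occu occv] k a]; rewrite ?size_cat.
  split=> k a ks.
    by rewrite (occ k a) ?size_cat ?nth_cat ?ks //; apply: ltn_addr.
  rewrite -Z.add_assoc -Nat2Z.inj_add (occ _ a) ?size_cat ?ltn_add2l //.
  by rewrite nth_cat ltnNge leq_addr /= addKn.
move=> kuv; rewrite nth_cat; case: ltnP => [ku|uk]; first exact: occu.
have -> : Z.of_nat k = Z.of_nat (size u) + Z.of_nat (k - size u) by lia.
by rewrite Z.add_assoc (occv _ a) //; lia.
Qed.

Lemma occurs_at_shiftZ (C : Type) (x : point C) (u : list C) (t i : Z) :
  occurs_at (shiftZ t x) u i <-> occurs_at x u (i + t).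
Proof.
by split=> occ k a ku; rewrite -(occ k a ku) /shiftZ; congr x; lia.
Qed.

Lemma occurs_at_agree_on (C : Type) (x x' : point C) (u : list C) (i : Z) (n : nat) :
  agree_on x x' n -> Z.abs i + Z.of_nat (size u) <= Z.of_nat n ->
  occurs_at x u i -> occurs_at x' u i.
Proof. by move=> xx' un occ k a ku; rewrite -xx'; [exact: occ | lia]. Qed.

Lemma occurs_at_twice (C : Type) (x : point C) (u : list C) (i i' : Z) :
  i + Z.of_nat (size u) <= i' -> occurs_at x u i -> occurs_at x u i' ->
  exists v, occurs_at x (u ++ v ++ u) i.
Proof.
move=> ii' occ occ'; set L := Z.to_nat (i' - i - Z.of_nat (size u)).
exists (block L x (i + Z.of_nat (size u))).
apply/occurs_at_cat; split=> //; apply/occurs_at_cat; split.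
  by apply/occurs_at_block.
by rewrite size_tuple (_ : _ + _ + _ = i'); last lia.
Qed.

Section FiberHull.
Variables (A B : finType) (X : pset A) (phi : point A -> point B) (y : point B).

Definition fiber_hull : pset A :=
  fun w => forall N : nat, exists x p, X x /\ phi x = y /\ agree_on w (shiftZ p x) N.

Lemma fiber_hull_shift_space : shift_space fiber_hull.
Proof.
split.
  move=> w w_lim N; have [w' [w'hull ww']] := w_lim N.
  have [x [p [Xx [phix w'x]]]] := w'hull N.
  by exists x, p; split=> //; split=> // i iN; rewrite ww' ?w'x.
move=> w; split=> whull N; have [x [p [Xx [phix wx]]]] := whull N.+1.
  by exists x, (p + 1); split=> //; split=> // i iN;
    rewrite /shift wx /shiftZ; [congr x|]; lia.
exists x, (p - 1); split=> //; split=> // i iN.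
by have := wx (i - 1); rewrite /shift Z.sub_add /shiftZ => ->; [congr x|]; lia.
Qed.

Lemma fiber_hull_sub : shift_space X -> forall w, fiber_hull w -> X w.
Proof.
move=> [Xclosed Xinv] w whull; apply: Xclosed => N.
have [x [p [Xx [_ wx]]]] := whull N.
by exists (shiftZ p x); split=> //; apply: shiftZ_invariant.
Qed.

Lemma fiber_hull_fiber (x : point A) : X x -> phi x = y -> fiber_hull x.
Proof. by move=> Xx phix N; exists x, 0; rewrite shiftZ0. Qed.

Lemma fiber_hull_nonwandering :
  (forall x1, X x1 -> phi x1 = y -> forall (n : nat) (D : Z),
    exists x t t', X x /\ phi x = y /\ t + D <= t' /\
      agree_on (shiftZ t x) x1 n /\ agree_on (shiftZ t' x) x1 n) ->
  nonwandering fiber_hull.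
Proof.
move=> returns_twice u [w [i [whull occ]]].
have [x1 [p [Xx1 [phix1 wx1]]]] := whull (Z.to_nat (Z.abs i + Z.of_nat (size u))).
have occ1 : occurs_at x1 u (i + p).
  by apply/occurs_at_shiftZ; apply: occurs_at_agree_on wx1 _ occ; lia.
have [x [t [t' [Xx [phix [tt' [xtx1 xt'x1]]]]]]] :=
  returns_twice x1 Xx1 phix1 (Z.to_nat (Z.abs (i + p) + Z.of_nat (size u))) (Z.of_nat (size u)).
have occ_at s : agree_on (shiftZ s x) x1 (Z.to_nat (Z.abs (i + p) + Z.of_nat (size u))) ->
    occurs_at x u (i + p + s).
  move=> xsx1; apply/occurs_at_shiftZ.
  by apply: (occurs_at_agree_on (x := x1) _ _ occ1) => [j /xsx1 ->|]; last lia.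
have [|v occ2] := occurs_at_twice _ (occ_at _ xtx1) (occ_at _ xt'x1); first lia.
by exists v, x, (i + p + t); split=> //; apply: fiber_hull_fiber.
Qed.

End FiberHull.

Theorem lemma3p2 (A B : finType) (X : pset A) (Y : pset B)
  (phi : point A -> point B) :
  sofic X -> sofic Y -> irreducible Y ->
  factor_code X Y phi -> finite_to_one X phi ->
  forall y, doubly_transitive Y y ->
  forall x, X x -> phi x = y -> Omega X x.
Proof.
move=> Xsofic _ _ phi_factor phi_fin y y_dt x Xx phix.
have [[X_shift _] _] := phi_factor.
exists (fiber_hull X phi y); split; first exact: fiber_hull_shift_space.
split; first exact: fiber_hull_sub.
split; last exact: fiber_hull_fiber.
apply: fiber_hull_nonwandering => x1 Xx1 phix1.
exact: fiber_return_twice Xsofic phi_factor phi_fin y y_dt x1 Xx1 phix1.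
Qed.
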